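(* Let $G$ be a finite multigraph (parallel edges allowed, no loops), let $k$ be a positive integer, and let $A$ be a proper subset of $V(G)$ such that between any two distinct vertices of $A$ there are $2k$ pairwise edge-disjoint paths in $G$. Assume that there is no edge of $G$ with both endvertices outside of $A$, and let $s$ be a vertex not in $A$ with $\deg(s) > 3$. Then the lifting graph $L(G,s,\tau_A)$ is either (a) a complete multipartite graph, or (b) the disjoint union of an isolated vertex and a complete bipartite graph whose two partition classes have equal size; in particular, this case can only occur if $\deg(s)$ is odd.
   Context: Lifting two distinct edges $sx, sy$ incident with $s$ means deleting them and adding a new edge $xy$ (possibly parallel to existing edges). $\lambda_G(x,y)$ denotes the maximum number of pairwise edge-disjoint $x$–$y$ paths in $G$. The target function $\tau_A$ is defined on pairs of vertices by $\tau_A(x,y) = 2k$ if $x,y \in A$ and $\tau_A(x,y)=0$ otherwise. A pair of edges incident with $s$ is $\tau_A$-admissible if after lifting them the resulting graph $G'$ satisfies $\lambda_{G'}(x,y) \geq \tau_A(x,y)$ for all distinct $x,y \in V(G)\setminus\{s\}$. The lifting graph $L(G,s,\tau_A)$ is the graph whose vertices are the edges incident with $s$, two of them being adjacent if and only if they form a $\tau_A$-admissible pair. *)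

From mathcomp Require Import all_boot.
Set Implicit Arguments. Unset Strict Implicit. Unset Printing Implicit Defensive.

(* A finite multigraph on the vertex set V (a finType) is an
   edge list G : seq (V * V); the edges are the indices 0 .. size G - 1, so
   parallel edges are distinct edges. *)

Section MultiGraph.
Variable V : finType.

Definition loopless (G : seq (V * V)) : bool := all (fun e => e.1 != e.2) G.

Definition incident (s : V) (e : V * V) : bool := (e.1 == s) || (e.2 == s).

Definition other (s : V) (e : V * V) : V := if e.1 == s then e.2 else e.1.

(* degree (no loops, so each incident edge counts once) *)
Definition deg (G : seq (V * V)) (s : V) : nat := count (incident s) G.

Definition joins (G : seq (V * V)) (t : nat) (a b : V) : bool :=
  (t < size G) && ((nth (a, a) G t == (a, b)) || (nth (a, a) G t == (b, a))).

(* (x :: vs) is the vertex sequence of a path from x to y whose i-th edge is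
   the edge with index nth 0 es i *)
Definition is_path (G : seq (V * V)) (x y : V) (vs : seq V) (es : seq nat) : Prop :=
  [/\ uniq (x :: vs), last x vs = y, size es = size vs &
      forall i, i < size vs -> joins G (nth 0 es i) (nth x (x :: vs) i) (nth x vs i)].

Definition edge_disjoint_paths (G : seq (V * V)) (x y : V) (n : nat) : Prop :=
  exists P : seq (seq V * seq nat),
    [/\ size P = n,
        forall p, p \in P -> is_path G x y p.1 p.2 &
        uniq (flatten (map snd P))].

(* lifting edges number i and j (both incident with s): delete them, add xy *)
Definition lift (G : seq (V * V)) (s : V) (i j : nat) : seq (V * V) :=
  (other s (nth (s, s) G i), other s (nth (s, s) G j))
    :: [seq nth (s, s) G t | t <- iota 0 (size G) & (t != i) && (t != j)].

Definition tauA (A : {set V}) (k : nat) (x y : V) : nat :=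
  if (x \in A) && (y \in A) then 2 * k else 0.

Definition admissible (G : seq (V * V)) (A : {set V}) (k : nat) (s : V) (i j : nat) : Prop :=
  forall x y : V, x != s -> y != s -> x != y ->
    edge_disjoint_paths (lift G s i j) x y (tauA A k x y).

(* vertices of the lifting graph: the edges incident with s *)
Definition LVert (G : seq (V * V)) (s : V) :=
  {i : 'I_(size G) | incident s (nth (s, s) G i)}.

Definition Ladj (G : seq (V * V)) (A : {set V}) (k : nat) (s : V)
  (u v : LVert G s) : Prop :=
  val u != val v /\ admissible G A k s (val (val u)) (val (val v)).

End MultiGraph.

Definition complete_multipartite (T : finType) (adj : T -> T -> Prop) : Prop :=
  exists c : T -> nat, forall u v, u != v -> (adj u v <-> c u != c v).

(* disjoint union of an isolated vertex w and a complete bipartite graph with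
   classes X and Y := T \ ({w} u X) of equal size *)
Definition isolated_plus_balanced_bipartite (T : finType) (adj : T -> T -> Prop) : Prop :=
  exists (w : T) (X : {set T}),
    [/\ w \notin X,
        #|X| = #|~: (w |: X)|,
        forall v, ~ adj w v /\ ~ adj v w &
        forall u v, u != w -> v != w -> u != v ->
          (adj u v <-> (u \in X) != (v \in X))].

From Pilot Require Import Defs.
From mathcomp Require Import all_boot zify.
From Stdlib Require Import Classical.
Set Implicit Arguments. Unset Strict Implicit. Unset Printing Implicit Defensive.

(* A set X of vertices is dangerous if s is not in X, X splits A and
   d(X) <= 2k+1, where d(X) counts the edges leaving X.  Lifting su and sv
   lowers d(X) by 2 exactly when u and v lie in X, so by Menger's theorem
   (proved here by induction on the number of non-loop edges, contracting
   either side of a nontrivial minimum cut) the pair su, sv is admissible iff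
   no dangerous set contains both u and v.  The lifting graph is thus the
   complement of the relation "lie in a common dangerous set".  If this
   relation is transitive, its classes are the parts of a complete
   multipartite graph.  Otherwise there are dangerous sets X and Y sharing the
   end of an edge f at s, and ends in X - Y and Y - X that no dangerous set
   contains together.  Submodularity, posimodularity and the parity of d show
   that X and Y cover A and share no other end; the edges at s then split
   into f, those ending in X - Y and those ending in Y - X, the last two
   classes have equal size, and, as deg(s) > 3, no edge of one of them is
   related to an edge of the other: an isolated vertex f plus a balanced
   complete bipartite graph. *)

Lemma count_ltn_in (T : eqType) (a1 a2 : pred T) (s : seq T) :
  {in s, subpred a1 a2} -> (exists2 z, z \in s & a2 z && ~~ a1 z) ->
  count a1 s < count a2 s.
Proof.
elim: s => [_ []|b s IH] //= sub [z]; rewrite inE => /predU1P [-> {z}|zs] /andP [a2z a1z].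
  rewrite a2z (negbTE a1z) add0n add1n ltnS -(eq_in_count (a1 := predI a1 a2)).
    by apply: sub_count => w /andP [].
  by move=> w ws /=; case a1w: (a1 w); rewrite // (sub w) // inE ws orbT.
have sub' : {in s, subpred a1 a2} by move=> w ws; apply: sub; rewrite inE ws orbT.
have := IH sub' (ex_intro2 _ _ z zs (introT andP (conj a2z a1z))).
case a1b: (a1 b); last by move/leq_trans; apply; rewrite leq_addl.
by rewrite (sub b) ?mem_head.
Qed.

Lemma count_sum (T : Type) (p : pred T) (l : seq T) : count p l = \sum_(e <- l) p e.
Proof. by elim: l => [|a l IH]; rewrite ?big_nil ?big_cons //= IH. Qed.

Lemma subseq_flatten_map (T1 : Type) (T2 : eqType) (F H : T1 -> seq T2) (L : seq T1) :
  (forall p, subseq (F p) (H p)) -> subseq (flatten (map F L)) (flatten (map H L)).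
Proof. by move=> FH; elim: L => //= a L IH; apply: cat_subseq. Qed.

Lemma perm_flatten_cat (T1 : Type) (T2 : eqType) (F H : T1 -> seq T2) (L : seq T1) :
  perm_eq (flatten (map (fun p => F p ++ H p) L)) (flatten (map F L) ++ flatten (map H L)).
Proof.
elim: L => //= a L IH.
by rewrite -!catA perm_cat2l perm_sym perm_catCA perm_cat2l perm_sym.
Qed.

Lemma flatten_snd_uniq (A B : eqType) (P : seq (A * seq B)) :
  uniq (flatten (map snd P)) -> (forall p, p \in P -> p.2 != [::]) ->
  uniq P /\ {in P &, forall p q t, t \in p.2 -> t \in q.2 -> p = q}.
Proof.
elim: P => [|a P IH] //= + ne; rewrite cat_uniq => /and3P [ua hna /IH []].
  by move=> p pP; apply: ne; rewrite inE pP orbT.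
move=> uP shareP.
have disj q t : q \in P -> t \in a.2 -> t \in q.2 -> False.
  move=> qP ta tq; case/hasP: hna; exists t => //.
  by apply/flattenP; exists q.2 => //; apply: map_f.
split.
  rewrite uP andbT; apply/negP => aP.
  have := ne a (mem_head _ _); case E: a.2 => [|t s] // _.
  by apply: (disj a t aP); rewrite E mem_head.
move=> p q; rewrite !inE => /predU1P [->|pP] /predU1P [->|qP] t tp tq //.
- by case: (disj q t qP tp tq).
- by case: (disj p t pP tq tp).
exact: shareP pP qP t tp tq.
Qed.

Lemma card_ord_count n (p : pred nat) : #|[set i : 'I_n | p i]| = count p (iota 0 n).
Proof.
rewrite -sum1dep_card big_mkcond /= -(big_mkord xpredT (fun i => if p i then 1 else 0)).
by rewrite /index_iota subn0 -sum1_count [RHS]big_mkcond.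
Qed.

(** * Walks, paths and cuts *)

Section Walks.
Variable V : finType.
Implicit Types (G : seq (V * V)).

Fixpoint walk G (x : V) (vs : seq V) (es : seq nat) : bool :=
  match vs, es with
  | [::], [::] => true
  | v :: vs', e :: es' => joins G e x v && walk G v vs' es'
  | _, _ => false
  end.

Lemma walk_size G x vs es : walk G x vs es -> size es = size vs.
Proof.
by elim: vs x es => [|v vs IH] x [|e es] //= /andP [_ /IH ->].
Qed.

Lemma is_pathE G x y vs es :
  is_path G x y vs es <-> [/\ uniq (x :: vs), last x vs = y & walk G x vs es].
Proof.
have nthS (z v : V) vs' i : i < size vs' ->
    nth z (v :: vs') i = nth v (v :: vs') i /\ nth z vs' i = nth v vs' i.
  by move=> lti; split; apply: set_nth_default; rewrite //= ltnW.
split=> [[u l sz hj]|[u l w]]; split=> //.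
- elim: vs x es sz hj {u l y} => [|v vs IH] x [|e es] //= [sz] hj.
  rewrite (hj 0) //=; apply: IH => // i lti.
  by have := hj i.+1 lti; case: (nthS x v vs i lti) => /= -> ->.
- exact: walk_size w.
elim: vs x es w {u l y} => [|v vs IH] x [|e es] //= /andP [j w] [|i] lti //=.
by case: (nthS x v vs i lti) => -> ->; apply: IH.
Qed.

Lemma walk_cat G x vs1 vs2 es1 es2 : size es1 = size vs1 ->
  walk G x (vs1 ++ vs2) (es1 ++ es2) = walk G x vs1 es1 && walk G (last x vs1) vs2 es2.
Proof. by elim: vs1 x es1 => [|v vs IH] x [|e es] //= [/IH ->]; rewrite andbA. Qed.

Lemma joins_nth G t a b : joins G t a b ->
  t < size G /\ (forall d, nth d G t = (a, b) \/ nth d G t = (b, a)).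
Proof.
case/andP=> lt /orP [] /eqP h; split=> // d;
  rewrite (set_nth_default (a, a)) //; by [left|right].
Qed.

Lemma nth_joins G t a b d : t < size G -> nth d G t = (a, b) \/ nth d G t = (b, a) ->
  joins G t a b.
Proof.
move=> lt h; rewrite /joins lt /= (set_nth_default d) //.
by case: h => ->; rewrite eqxx ?orbT.
Qed.

Lemma joins_sym G t a b : joins G t a b = joins G t b a.
Proof. by rewrite /joins; case: ltnP => //= lt; rewrite (set_nth_default (b, b)) // orbC. Qed.

End Walks.

Section Cuts.
Variable V : finType.
Implicit Types (G : seq (V * V)) (U : {set V}).

Definition crossing U (e : V * V) : bool := (e.1 \in U) != (e.2 \in U).

Definition dcut G U : nat := count (crossing U) G.

Lemma crossing_loop U v : crossing U (v, v) = false.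
Proof. by rewrite /crossing eqxx. Qed.

Lemma dcut_iota G U d : ~~ crossing U d ->
  count (fun t => crossing U (nth d G t)) (iota 0 (size G)) = dcut G U.
Proof.
by move=> /negbTE cd; rewrite /dcut -{3}(mkseq_nth d G) /mkseq count_map.
Qed.

Lemma crossing_joins G U t a b d : joins G t a b ->
  crossing U (nth d G t) = ((a \in U) != (b \in U)).
Proof. by case/joins_nth=> _ /(_ d) [] ->; rewrite /crossing //= eq_sym. Qed.

Lemma dcutC G U : dcut G (~: U) = dcut G U.
Proof. by apply: eq_count => e; rewrite /crossing !inE; do 2!case: (_ \in U). Qed.

Lemma walk_crossing G U x vs es d : walk G x vs es -> x \in U -> last x vs \notin U ->
  exists2 t, t \in es & crossing U (nth d G t).
Proof.
elim: vs x es => [|v vs IH] x [|t es] //=; first by move=> _ ->.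
case/andP=> /joins_nth [_ xv] w xU lU.
case vU: (v \in U).
  by have [t' t'es ct'] := IH v es w vU lU; exists t' => //; rewrite inE t'es orbT.
by exists t; rewrite ?mem_head //; case: (xv d) => ->; rewrite /crossing /= xU vU.
Qed.

Lemma edp_le_dcut G x y n U : edge_disjoint_paths G x y n -> x \in U -> y \notin U ->
  n <= dcut G U.
Proof.
case=> P [<- pathP uP] xU yU.
pose F (p : seq V * seq nat) := [seq t <- p.2 | crossing U (nth (x, x) G t)].
have uF : uniq (flatten (map F P)).
  by apply: subseq_uniq uP; apply: subseq_flatten_map => p; apply: filter_subseq.
have sub : {subset flatten (map F P) <=
           [seq t <- iota 0 (size G) | crossing U (nth (x, x) G t)]}.
  move=> t /flattenP [_ /mapP [p _ ->]]; rewrite !mem_filter => /andP [ct _].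
  rewrite ct mem_iota /=; case: ltnP => // le.
  by move: ct; rewrite nth_default // crossing_loop.
have := uniq_leq_size uF sub; rewrite size_filter dcut_iota ?crossing_loop //.
apply: leq_trans; elim: P pathP {uP uF sub} => //= p P IH pathP.
rewrite size_cat -add1n leq_add //; last by apply: IH => q qP; apply: pathP; rewrite inE qP orbT.
have /is_pathE [_ l w] := pathP p (mem_head _ _).
have [t tp ct] : exists2 t, t \in p.2 & crossing U (nth (x, x) G t).
  by apply: walk_crossing w xU _; rewrite l.
have : t \in F p by rewrite mem_filter ct.
by case: (F p).
Qed.

End Cuts.

(** * Menger's theorem *)

Section Subgraphs.
Variable V : finType.
Implicit Types (G : seq (V * V)) (U : {set V}).

Definition min_cut_ge G x y n := forall U, x \in U -> y \notin U -> n <= dcut G U.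

Definition nonloops G := count (fun e : V * V => e.1 != e.2) G.

Lemma min_cut_geC G x y n : min_cut_ge G x y n -> min_cut_ge G y x n.
Proof. by move=> cut U yU xU; rewrite -dcutC; apply: cut; rewrite inE ?xU ?yU. Qed.

Lemma walk_edges_ltn G x vs es : walk G x vs es -> all (fun t => t < size G) es.
Proof.
by elim: vs x es => [|v vs IH] x [|t es] //= /andP [/andP [-> _] /IH].
Qed.

Lemma walk_nonloop G x vs es t : walk G x vs es -> uniq (x :: vs) -> t \in es ->
  exists2 ab : V * V, ab.1 != ab.2 & joins G t ab.1 ab.2.
Proof.
elim: vs x es => [|v vs IH] x [|t' es] //= /andP [j w] /andP [xvs u].
rewrite inE => /predU1P [->|tes]; last exact: IH w u tes.
by exists (x, v) => //=; apply: contraNneq xvs => ->; rewrite mem_head.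
Qed.

Lemma walk_subgraph G G' x vs es :
  (forall t a b, a != b -> joins G' t a b -> joins G t a b) ->
  uniq (x :: vs) -> walk G' x vs es -> walk G x vs es.
Proof.
move=> sub; elim: vs x es => [|v vs IH] x [|t es] //= /andP [xvs u] /andP [j w].
rewrite sub //= ?IH //; by apply: contraNneq xvs => ->; rewrite mem_head.
Qed.

Lemma is_path_subgraph G G' x y vs es :
  (forall t a b, a != b -> joins G' t a b -> joins G t a b) ->
  is_path G' x y vs es -> is_path G x y vs es.
Proof.
by move=> sub /is_pathE [u l w]; apply/is_pathE; split=> //; apply: walk_subgraph w.
Qed.

Lemma edp_subgraph G G' x y n :
  (forall t a b, a != b -> joins G' t a b -> joins G t a b) ->
  edge_disjoint_paths G' x y n -> edge_disjoint_paths G x y n.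
Proof.
by move=> sub [P [sz pathP u]]; exists P; split=> // p /pathP; apply: is_path_subgraph.
Qed.

End Subgraphs.

Section Erasure.
Variable V : finType.
Implicit Types (G : seq (V * V)) (U : {set V}).

(* Erased edges become loops at z, so that edge indices are preserved. *)
Definition erase_edges G (ts : seq nat) (z : V) :=
  foldr (fun t H => set_nth (z, z) H t (z, z)) G ts.

Lemma size_erase_edges G ts z : all (fun t => t < size G) ts ->
  size (erase_edges G ts z) = size G.
Proof.
elim: ts => //= t ts IH /andP [lt a]; rewrite size_set_nth IH //.
exact/maxn_idPr.
Qed.

Lemma nth_erase_edges G ts z d i : all (fun t => t < size G) ts -> i < size G ->
  nth d (erase_edges G ts z) i = if i \in ts then (z, z) else nth d G i.
Proof.
move=> + lt; elim: ts => //= t ts IH /andP [lt' a].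
rewrite (set_nth_default (z, z)) ?size_set_nth ?size_erase_edges ?leq_max ?lt ?orbT //.
rewrite nth_set_nth /= inE; case: eqVneq => //= _.
by rewrite -(set_nth_default (z, z) d) ?size_erase_edges // IH.
Qed.

Lemma count_erase_edges (p : pred (V * V)) G ts z : ~~ p (z, z) -> uniq ts ->
  all (fun t => t < size G) ts ->
  count p (erase_edges G ts z) + count (fun t => p (nth (z, z) G t)) ts = count p G.
Proof.
move=> pz; elim: ts => /= [|t ts IH]; first by rewrite addn0.
case/andP=> tts u /andP [lt a].
have ltE : t < size (erase_edges G ts z) by rewrite size_erase_edges.
rewrite count_set_nth_ltn // (negbTE pz) addn0 nth_erase_edges // (negbTE tts).
have := IH u a; case pt: (p (nth (z, z) G t)) => /=; last by rewrite subn0.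
have : 0 < count p (erase_edges G ts z).
  rewrite -has_count; apply/hasP; exists (nth (z, z) (erase_edges G ts z) t).
    exact: mem_nth.
  by rewrite nth_erase_edges // (negbTE tts).
lia.
Qed.

Lemma joins_erase_edges G ts z t a b : all (fun t => t < size G) ts ->
  joins (erase_edges G ts z) t a b -> a != b -> joins G t a b /\ t \notin ts.
Proof.
move=> al /joins_nth [lt hh] ab; rewrite size_erase_edges // in lt.
have := hh (z, z); rewrite nth_erase_edges //; case: ifP => tts.
  by move: ab => /[swap] -[] [<- <-]; rewrite eqxx.
by move=> h; split => //; apply: nth_joins lt h.
Qed.

Lemma nonloops_erase_edges G ts z : all (fun t => t < size G) ts -> uniq ts ->
  (exists2 t, t \in ts & (nth (z, z) G t).1 != (nth (z, z) G t).2) ->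
  nonloops (erase_edges G ts z) < nonloops G.
Proof.
move=> al u [t tts ne].
have pz : ~~ ((fun e : V * V => e.1 != e.2) (z, z)) by rewrite /= eqxx.
rewrite /nonloops -(count_erase_edges pz u al) -[X in X < _]addn0 ltn_add2l.
by rewrite -has_count; apply/hasP; exists t.
Qed.

Lemma edp_augment G x y n vs es : x != y -> is_path G x y vs es -> uniq es ->
  edge_disjoint_paths (erase_edges G es x) x y n -> edge_disjoint_paths G x y n.+1.
Proof.
move=> xy /is_pathE [u l w] ues [P [sz pathP uP]].
have al := walk_edges_ltn w.
have jE t a b := @joins_erase_edges G es x t a b al.
exists ((vs, es) :: P); split=> /=; first by rewrite sz.
  move=> p; rewrite inE => /predU1P [->|/pathP]; first exact/is_pathE.
  by apply: is_path_subgraph => t a b ab /jE-/(_ ab) [].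
rewrite cat_uniq ues uP andbT /=; apply/hasP => -[t /flattenP [_ /mapP [p /pathP pp ->] tp] tes].
have /is_pathE [up _ wp] := pp.
have [[a b] /= ab j] := walk_nonloop wp up tp.
by have [_ /negP] := jE _ _ _ j ab.
Qed.

Lemma min_cut_erase_edges G x y n es : all (fun t => t < size G) es -> uniq es ->
  min_cut_ge G x y n.+1 ->
  (forall U, x \in U -> y \notin U -> count (fun t => crossing U (nth (x, x) G t)) es <= 1) ->
  min_cut_ge (erase_edges G es x) x y n.
Proof.
move=> al u cut once U xU yU.
have := count_erase_edges (negbT (crossing_loop U x)) u al.
have := cut U xU yU; have := once U xU yU; rewrite /dcut; lia.
Qed.

End Erasure.

Section Images.
Variable V : finType.
Implicit Types (G : seq (V * V)) (U : {set V}) (f : V -> V).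

Definition gmap f G := map (fun e => (f e.1, f e.2)) G.

Lemma size_gmap f G : size (gmap f G) = size G.
Proof. exact: size_map. Qed.

Lemma nth_gmap f G d i : i < size G ->
  nth d (gmap f G) i = (f (nth d G i).1, f (nth d G i).2).
Proof. by move=> lt; rewrite /gmap (nth_map d). Qed.

Lemma joins_gmap f G t a b : joins (gmap f G) t a b ->
  exists a' b', [/\ f a' = a, f b' = b & joins G t a' b'].
Proof.
case/joins_nth; rewrite size_gmap => lt /(_ (a, a)); rewrite nth_gmap //.
case E: (nth (a, a) G t) => [c d] /= [] [<- <-].
  by exists c, d; split=> //; apply: nth_joins lt _; left; exact: E.
by exists d, c; split=> //; apply: nth_joins lt _; right; exact: E.
Qed.

Lemma dcut_gmap f G U : dcut (gmap f G) U = dcut G (f @^-1: U).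
Proof. by rewrite /dcut count_map; apply: eq_count => e; rewrite /crossing /= !inE. Qed.

Lemma min_cut_gmap f G x y n : f x = x -> f y = y -> min_cut_ge G x y n ->
  min_cut_ge (gmap f G) x y n.
Proof. by move=> fx fy cut U xU yU; rewrite dcut_gmap; apply: cut; rewrite inE ?fx ?fy. Qed.

Lemma nonloops_gmap f G e : e \in G -> e.1 != e.2 -> f e.1 = f e.2 ->
  nonloops (gmap f G) < nonloops G.
Proof.
move=> eG ne fe; rewrite /nonloops /gmap count_map; apply: count_ltn_in.
  by move=> [a b] _ /=; apply: contraNneq => ->.
by exists e => //=; rewrite ne fe eqxx.
Qed.

Lemma walk_vertices_in G x vs es (S : {set V}) : (forall t a b, joins G t a b -> b \in S) ->
  walk G x vs es -> all (mem S) vs.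
Proof.
move=> h; elim: vs x es => [|v vs IH] x [|t es] //= /andP [j w].
by rewrite (h _ _ _ j) (IH _ _ w).
Qed.

Lemma walk_within G G' x vs es (S : {set V}) :
  (forall t a b, a \in S -> b \in S -> joins G' t a b -> joins G t a b) ->
  x \in S -> all (mem S) vs -> walk G' x vs es -> walk G x vs es.
Proof.
move=> h; elim: vs x es => [|v vs IH] x [|t es] //= xS /andP [vS a] /andP [j w].
by rewrite (h _ _ _ xS vS j) (IH _ _ vS a w).
Qed.

Lemma walk_edges_within G x vs es (S : {set V}) t :
  x \in S -> all (mem S) vs -> walk G x vs es -> t \in es ->
  forall d, ((nth d G t).1 \in S) && ((nth d G t).2 \in S).
Proof.
elim: vs x es => [|v vs IH] x [|t' es] //= xS /andP [vS a] /andP [j w].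
rewrite inE => /predU1P [-> d|]; last exact: IH vS a w.
by have [_ /(_ d) [] ->] := joins_nth j; rewrite /= xS vS.
Qed.

Lemma last_in x vs (S : {set V}) : x \in S -> all (mem S) vs -> last x vs \in S.
Proof. by elim: vs x => //= v vs IH x _ /andP [vS /IH]; apply. Qed.

End Images.

Section Contraction.
Variables (V : finType) (G : seq (V * V)) (U : {set V}) (x y : V).
Hypotheses (xy : x != y) (xU : x \in U) (yU : y \notin U).

Definition contract_out v := if v \in U then v else y.
Definition contract_in v := if v \in U then x else v.

Lemma contract_outU v : (contract_out v \in U) = (v \in U).
Proof. by rewrite /contract_out; case: ifP => // _; exact: negbTE. Qed.

Lemma contract_out_id v : v \in U -> contract_out v = v.
Proof. by rewrite /contract_out => ->. Qed.

Lemma contract_inU v : (contract_in v \in U) = (v \in U).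
Proof. by rewrite /contract_in; case: ifP. Qed.

Lemma contract_in_id v : v \notin U -> contract_in v = v.
Proof. by rewrite /contract_in => /negbTE ->. Qed.

Lemma path_contract_out vs es : is_path (gmap contract_out G) x y vs es ->
  exists pre epre t w, [/\ vs = rcons pre y /\ es = rcons epre t, uniq (x :: pre),
    all (mem U) pre, walk G x pre epre & w \notin U /\ joins G t (last x pre) w].
Proof.
case/is_pathE=> u + w; case/lastP: vs u w => [|pre v] u w /=.
  by move=> l; move: xy; rewrite l eqxx.
rewrite last_rcons => vy; subst v.
have := walk_size w; rewrite size_rcons; case/lastP: es w => // epre t w.
rewrite size_rcons => -[sz]; rewrite -!cats1 walk_cat // in w.
case/andP: w => w1 /= /andP [jt _].
have [xpre ypre upre] : [/\ x \notin pre, y \notin pre & uniq pre].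
  by move: u; rewrite /= mem_rcons inE negb_or rcons_uniq => /andP [/andP [_ ->] /andP [-> ->]].
have preU : all (mem U) pre.
  have preY : all (mem (y |: U)) pre.
    apply: (walk_vertices_in _ w1) => s a b /joins_gmap [a' [b' [_ <- _]]].
    by rewrite !inE /contract_out; case bU: (b' \in U); rewrite ?eqxx ?bU ?orbT.
  apply/allP=> v vpre; have := allP preY v vpre; rewrite !inE => /predU1P [vy|//].
  by rewrite -vy vpre in ypre.
have inner s a b : a \in U -> b \in U -> joins (gmap contract_out G) s a b -> joins G s a b.
  move=> aU bU /joins_gmap [a' [b' [fa fb j]]].
  by rewrite -fa -fb !contract_out_id // -contract_outU ?fa ?fb.
have u0U : last x pre \in U := last_in xU preU.
have [a' [w [fa fw jw]]] := joins_gmap jt.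
exists pre, epre, t, w; split=> //.
- by rewrite /= xpre.
- exact: walk_within inner xU preU w1.
have a'U : a' \in U by rewrite -contract_outU fa.
split; first by rewrite -contract_outU fw.
by rewrite -fa contract_out_id.
Qed.

Lemma path_contract_in vs es : is_path (gmap contract_in G) x y vs es ->
  exists v1 suf t esuf u, [/\ vs = v1 :: suf /\ es = t :: esuf, uniq (v1 :: suf),
    all (mem (~: U)) (v1 :: suf), last v1 suf = y /\ walk G v1 suf esuf &
    u \in U /\ joins G t u v1].
Proof.
case/is_pathE=> u l w0; case: vs u l w0 => [|v1 suf] u l w0.
  by move: xy; rewrite -l eqxx.
case: es w0 => [|t esuf] // w0; have /= /andP [jt w] := w0.
case/andP: u => xvs u.
have vsU : all (mem (~: U)) (v1 :: suf).
  have vsX : all (mem (x |: ~: U)) (v1 :: suf).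
    apply: (walk_vertices_in _ w0) => s a b /joins_gmap [a' [b' [_ <- _]]].
    by rewrite !inE /contract_in; case bU: (b' \in U) => /=; rewrite ?eqxx ?bU ?orbT.
  apply/allP=> v vvs; have := allP vsX v vvs; rewrite !inE => /predU1P [vx|//].
  by rewrite -vx vvs in xvs.
have inner s a b : a \in ~: U -> b \in ~: U -> joins (gmap contract_in G) s a b -> joins G s a b.
  rewrite !inE => aU bU /joins_gmap [a' [b' [fa fb j]]].
  by rewrite -fa -fb !contract_in_id // -contract_inU ?fa ?fb.
have /andP [v1U sufU] := vsU.
have [u' [b' [fu' fb' j]]] := joins_gmap jt.
exists v1, suf, t, esuf, u'; split=> //.
  by split=> //; apply: walk_within inner v1U sufU w.
have b'U : b' \notin U by rewrite -contract_inU fb' -in_setC.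
by rewrite -contract_inU fu' xU -fb' contract_in_id.
Qed.

End Contraction.

(* A path of the graph where V - U is contracted to y leaves U once, through
   its last edge, and a path of the graph where U is contracted to x enters
   V - U through its first edge.  With n = d(U) paths of each kind, every
   crossing edge of U ends exactly one path of the first kind and starts
   exactly one of the second, so the paths can be glued in pairs. *)
Section Glue.
Variables (V : finType) (G : seq (V * V)) (U : {set V}) (x y : V) (n : nat).
Variables (P1 P2 : seq (seq V * seq nat)).
Hypotheses (xy : x != y) (xU : x \in U) (yU : y \notin U) (cutU : dcut G U = n).
Hypotheses (size_P1 : size P1 = n) (uniq_P1 : uniq (flatten (map snd P1)))
  (path_P1 : forall p, p \in P1 -> is_path (gmap (contract_out U y) G) x y p.1 p.2).
Hypotheses (size_P2 : size P2 = n) (uniq_P2 : uniq (flatten (map snd P2)))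
  (path_P2 : forall p, p \in P2 -> is_path (gmap (contract_in U x) G) x y p.1 p.2).

Let C := [seq t <- iota 0 (size G) | crossing U (nth (x, x) G t)].
Let last_edge (p : seq V * seq nat) := last 0 p.2.
Let first_edge (p : seq V * seq nat) := head 0 p.2.

Lemma size_crossing_edges : size C = n.
Proof. by rewrite size_filter dcut_iota ?crossing_loop. Qed.

Lemma joins_crossing t a b : joins G t a b -> a \in U -> b \notin U -> t \in C.
Proof.
case/joins_nth=> lt /(_ (x, x)) nth_t aU bU; rewrite mem_filter mem_iota /= lt andbT.
by case: nth_t => ->; rewrite /crossing /= aU (negbTE bU).
Qed.

Lemma last_edgeP p : p \in P1 -> last_edge p \in p.2 /\ last_edge p \in C.
Proof.
move=> pP; rewrite /last_edge.
have [pre [epre [t [w [[_ ->] _ preU _ [wU jt]]]]]] := path_contract_out xy xU yU (path_P1 pP).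
rewrite last_rcons mem_rcons mem_head; split=> //.
exact: joins_crossing jt (last_in xU preU) wU.
Qed.

Lemma first_edgeP p : p \in P2 -> first_edge p \in p.2 /\ first_edge p \in C.
Proof.
move=> pP; rewrite /first_edge.
have [v1 [suf [t [esuf [u [[_ ->] _ vsU _ [uU jt]]]]]]] := path_contract_in xy xU (path_P2 pP).
rewrite /= mem_head; split=> //.
by apply: joins_crossing jt uU _; move: vsU => /= /andP [v1U _]; rewrite inE in v1U.
Qed.

Lemma map_edge_crossing (P : seq (seq V * seq nat)) (sel : seq V * seq nat -> nat) :
  size P = n -> uniq (flatten (map snd P)) ->
  (forall p, p \in P -> sel p \in p.2 /\ sel p \in C) ->
  [/\ uniq P, {in P &, injective sel} & map sel P =i C].
Proof.
move=> szP uP selP.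
have [uniqP shareP] : uniq P /\ {in P &, forall p q t, t \in p.2 -> t \in q.2 -> p = q}.
  by apply: flatten_snd_uniq => // p /selP [+ _]; case: p.2.
have inj : {in P &, injective sel}.
  move=> p q pP qP e; apply: (shareP p q pP qP (sel p)); first by case: (selP _ pP).
  by rewrite e; case: (selP _ qP).
split=> //; apply: (uniq_min_size _ _ _).2; rewrite ?map_inj_in_uniq //.
  by move=> _ /mapP [p /selP [_ ?] ->].
by rewrite size_map szP size_crossing_edges.
Qed.

Let partner p := nth ([::], [::]) P2 (find (fun q => first_edge q == last_edge p) P2).

Lemma partnerP p : p \in P1 -> partner p \in P2 /\ first_edge (partner p) = last_edge p.
Proof.
move=> pP; have [_ _ E1] := map_edge_crossing size_P1 uniq_P1 last_edgeP.
have [_ _ E2] := map_edge_crossing size_P2 uniq_P2 first_edgeP.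
have : last_edge p \in map first_edge P2 by rewrite E2 -E1 map_f.
case/mapP=> q qP qp; have hasp : has (fun q => first_edge q == last_edge p) P2.
  by apply/hasP; exists q; rewrite ?qp.
split; first by rewrite /partner mem_nth // -has_find.
by apply/eqP; exact: (nth_find _ hasp).
Qed.

Lemma perm_partner : perm_eq (map partner P1) P2.
Proof.
have [uP1 inj1 _] := map_edge_crossing size_P1 uniq_P1 last_edgeP.
have inj : {in P1 &, injective partner}.
  move=> p q pP qP e; apply: inj1 => //.
  by rewrite -(partnerP pP).2 -(partnerP qP).2 e.
have sub : {subset map partner P1 <= P2} by move=> _ /mapP [p /partnerP [? _] ->].
have up : uniq (map partner P1) by rewrite map_inj_in_uniq.
have [uP2 _ _] := map_edge_crossing size_P2 uniq_P2 first_edgeP.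
apply: uniq_perm => //; apply: (uniq_min_size up sub _).2.
by rewrite size_map size_P1 size_P2.
Qed.

Lemma joins_crossing_ends t a b a' b' : joins G t a b -> joins G t a' b' ->
  a \in U -> b \notin U -> a' \in U -> b' \notin U -> a' = a /\ b' = b.
Proof.
move=> /joins_nth [_ /(_ (a, a)) h] /joins_nth [_ /(_ (a, a)) h'] aU bU.
by move: h'; case: h => -> [] [<- <-]; rewrite ?aU ?bU.
Qed.

Let glue p := (take (size p.1).-1 p.1 ++ (partner p).1,
               take (size p.2).-1 p.2 ++ (partner p).2).

Lemma glue_path p : p \in P1 -> is_path G x y (glue p).1 (glue p).2.
Proof.
move=> pP; have [qP fe] := partnerP pP.
have [pre [epre [t [w [[e1 e2] upre preU wpre [wU jt]]]]]] :=
  path_contract_out xy xU yU (path_P1 pP).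
have [v1 [suf [t' [esuf [u [[f1 f2] usuf sufU [lsuf wsuf] [uU jt']]]]]]] :=
  path_contract_in xy xU (path_P2 qP).
have tt' : t' = t by move: fe; rewrite /first_edge /last_edge f2 e2 last_rcons.
subst t'; have v1U : v1 \notin U by move: sufU => /= /andP []; rewrite inE.
have u0U : last x pre \in U := last_in xU preU.
have [eu ev] := joins_crossing_ends jt jt' u0U wU uU v1U; subst u v1.
rewrite /glue e1 e2 f1 f2 !size_rcons /= -!cats1 !take_size_cat ?(walk_size wpre) //.
apply/is_pathE; split; last by rewrite walk_cat ?(walk_size wpre) //= wpre jt'.
  rewrite -cat_cons cat_uniq upre usuf andbT; apply/hasP=> -[v vsuf vpre].
  have : v \in ~: U by apply: (allP sufU).
  rewrite inE; move: vpre; rewrite inE => /predU1P [->|vpre]; first by rewrite xU.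
  by have := allP preU v vpre; rewrite inE => ->.
by rewrite last_cat.
Qed.

Lemma glue_prefix_inside p t : p \in P1 -> t \in take (size p.2).-1 p.2 ->
  ((nth (x, x) G t).1 \in U) && ((nth (x, x) G t).2 \in U).
Proof.
move=> pP; have [pre [epre [t' [w [[_ e2] _ preU wpre _]]]]] :=
  path_contract_out xy xU yU (path_P1 pP).
rewrite e2 size_rcons /= -cats1 take_size_cat ?(walk_size wpre) // => tpre.
exact: walk_edges_within xU preU wpre tpre (x, x).
Qed.

Lemma partner_edges_outside p t : p \in P1 -> t \in (partner p).2 ->
  ~~ (((nth (x, x) G t).1 \in U) && ((nth (x, x) G t).2 \in U)).
Proof.
move=> /partnerP [qP _]; have [v1 [suf [t' [esuf [u [[_ ->] _ sufU [_ wsuf] [uU jt]]]]]]] :=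
  path_contract_in xy xU (path_P2 qP).
have /andP [v1U sufU'] := sufU.
rewrite inE => /predU1P [->|tsuf].
  have [_ /(_ (x, x)) nth_t] := joins_nth jt; move: v1U; rewrite !inE => /negbTE v1U.
  by case: nth_t => ->; rewrite /= v1U ?andbF.
have := walk_edges_within v1U sufU' wsuf tsuf (x, x); rewrite !inE.
by case: (_ \in U).
Qed.

Lemma glue_disjoint : uniq (flatten (map snd (map glue P1))).
Proof.
have -> : map snd (map glue P1) =
          map (fun p => take (size p.2).-1 p.2 ++ (partner p).2) P1 by rewrite -map_comp.
rewrite (perm_uniq (perm_flatten_cat _ _ _)) cat_uniq; apply/and3P; split.
- by apply: subseq_uniq uniq_P1; apply: subseq_flatten_map => p; apply: take_subseq.
- apply/hasP=> -[t /flattenP [_ /mapP [q qP ->] tq] /flattenP [_ /mapP [p pP ->] tp]].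
  by have := partner_edges_outside qP tq; rewrite (glue_prefix_inside pP tp).
rewrite (map_comp snd partner) (perm_uniq (perm_flatten (perm_map _ perm_partner))).
exact: uniq_P2.
Qed.

Lemma edp_glue : edge_disjoint_paths G x y n.
Proof.
exists (map glue P1); split; first by rewrite size_map.
  by move=> _ /mapP [p pP ->]; apply: glue_path.
exact: glue_disjoint.
Qed.

End Glue.

Definition has_inner_edge (V : finType) (G : seq (V * V)) (U : {set V}) :=
  has (fun e : V * V => [&& e.1 != e.2, e.1 \in U & e.2 \in U]) G.

Lemma tight_cut_endpoint (V : finType) (G : seq (V * V)) x y m (U : {set V}) t a b :
  min_cut_ge G x y m -> x \in U -> y \notin U -> dcut G U <= m -> ~~ has_inner_edge G U ->
  joins G t a b -> a \in U -> b \notin U -> a = x.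
Proof.
move=> cut xU yU cutU /hasPn inner jt aU bU; apply/eqP/negPn/negP => ax.
(* Otherwise U :\ a would be a smaller x-y cut. *)
have := cut (U :\ a); rewrite !inE (negbTE yU) andbF eq_sym ax xU => /(_ isT isT).
rewrite leqNgt (leq_trans _ cutU) //; apply: count_ltn_in => [[c d] cdG|].
  have := inner _ cdG; rewrite /crossing !inE /=.
  case: (c =P a) => [->|ca]; case: (d =P a) => [->|da]; rewrite ?aU ?eqxx //=.
    by case: (d \in U); rewrite ?andbT //= negbK => /eqP ad; case: da.
  by case: (c \in U); rewrite ?andbT //= negbK => /eqP.
exists (nth (a, a) G t); first by rewrite mem_nth //; case/andP: jt.
by rewrite !(crossing_joins _ _ jt) !inE aU (negbTE bU) eqxx ?andbF.
Qed.

Section MengerStep.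
Variables (V : finType) (G : seq (V * V)).
Implicit Types (U : {set V}).
Hypothesis IH : forall (G' : seq (V * V)) x y n, nonloops G' < nonloops G -> x != y ->
  min_cut_ge G' x y n -> edge_disjoint_paths G' x y n.
Variables (x y : V) (n : nat).
Hypotheses (xy : x != y) (cut : min_cut_ge G x y n.+1).

Lemma edp_augment_min_cut vs es : is_path G x y vs es -> uniq es ->
  (forall U, x \in U -> y \notin U -> count (fun t => crossing U (nth (x, x) G t)) es <= 1) ->
  edge_disjoint_paths G x y n.+1.
Proof.
move=> p ues once; have /is_pathE [up l w] := p; have al := walk_edges_ltn w.
apply: (edp_augment xy p ues); apply: IH => //; last exact: min_cut_erase_edges.
apply: nonloops_erase_edges => //.
have [t tes] : exists t, t \in es.
  case: es w {p ues once al} => [|t es] w; last by exists t; exact: mem_head.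
  by case: vs l w {up} => [/eqP|] //; rewrite (negbTE xy).
have [[a b] /= ab jt] := walk_nonloop w up tes.
by exists t => //; case: (joins_nth jt) => _ /(_ (x, x)) [] ->; rewrite // eq_sym.
Qed.

Lemma edp_direct_edge t : joins G t x y -> edge_disjoint_paths G x y n.+1.
Proof.
move=> j; apply: (@edp_augment_min_cut [:: y] [:: t]) => //.
  by apply/is_pathE; rewrite /= inE xy j.
by move=> U _ _ /=; case: crossing.
Qed.

Lemma edp_two_path t1 t2 v : joins G t1 x v -> joins G t2 v y -> v != x -> v != y ->
  edge_disjoint_paths G x y n.+1.
Proof.
move=> j1 j2 vx vy.
have t12 : t1 != t2.
  apply/eqP=> e; move: j2; rewrite -e => /joins_nth [_ /(_ (x, x)) h2].
  case/joins_nth: j1 => _ /(_ (x, x)) h1; have := xy; move: vx vy.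
  by case: h1 h2 => -> [] [-> ->]; rewrite ?eqxx.
apply: (@edp_augment_min_cut [:: v; y] [:: t1; t2]) => /=.
- by apply/is_pathE; rewrite /= !inE !negb_or (eq_sym x v) vx xy vy j1 j2.
- by rewrite inE t12.
move=> U xU yU; rewrite (crossing_joins _ _ j1) (crossing_joins _ _ j2) xU (negbTE yU).
by case: (v \in U).
Qed.

Lemma edp_deletable_edge t : t < size G -> (nth (x, x) G t).1 != (nth (x, x) G t).2 ->
  min_cut_ge (erase_edges G [:: t] x) x y n.+1 -> edge_disjoint_paths G x y n.+1.
Proof.
move=> lt ne cut'; have al : all (fun s => s < size G) [:: t] by rewrite /= lt.
apply: (@edp_subgraph _ _ (erase_edges G [:: t] x)).
  by move=> s a b ab /joins_erase_edges-/(_ al ab) [].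
by apply: IH => //; apply: nonloops_erase_edges => //; exists t; rewrite ?mem_head.
Qed.

Lemma edp_split_cut U : x \in U -> y \notin U -> dcut G U = n.+1 ->
  has_inner_edge G U -> has_inner_edge G (~: U) -> edge_disjoint_paths G x y n.+1.
Proof.
move=> xU yU cutU /hasP [e1 e1G /and3P [ne1 e11 e12]] /hasP [e2 e2G].
rewrite !inE => /and3P [ne2 e21 e22].
have [P1 [sz1 path1 u1]] : edge_disjoint_paths (gmap (contract_out U y) G) x y n.+1.
  apply: IH => //; last by apply: min_cut_gmap; rewrite // /contract_out ?xU ?(negbTE yU).
  by apply: (nonloops_gmap e2G ne2); rewrite /contract_out (negbTE e21) (negbTE e22).
have [P2 [sz2 path2 u2]] : edge_disjoint_paths (gmap (contract_in U x) G) x y n.+1.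
  apply: IH => //; last by apply: min_cut_gmap; rewrite // /contract_in ?xU ?(negbTE yU).
  by apply: (nonloops_gmap e1G ne1); rewrite /contract_in e11 e12.
exact: (edp_glue xy xU yU cutU sz1 u1 path1 sz2 u2 path2).
Qed.

Lemma edge_at_terminal t a b : joins G t a b -> a != b ->
  ~ min_cut_ge (erase_edges G [:: t] x) x y n.+1 ->
  (forall U, x \in U -> y \notin U -> dcut G U = n.+1 ->
     ~~ (has_inner_edge G U && has_inner_edge G (~: U))) ->
  [|| a == x, b == x, a == y | b == y].
Proof.
move=> jt ab not_cut no_split.
have [U [xU yU small]] :
    exists U, [/\ x \in U, y \notin U & dcut (erase_edges G [:: t] x) U < n.+1].
  apply: NNPP => h; apply: not_cut => U xU yU; rewrite leqNgt; apply/negP => ?.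
  by apply: h; exists U.
have al : all (fun s => s < size G) [:: t] by rewrite /= (joins_nth jt).1.
have := count_erase_edges (negbT (crossing_loop U x)) (isT : uniq [:: t]) al.
rewrite [count _ [:: t]]/= addn0 (crossing_joins _ _ jt) => cutE; have lower := cut xU yU.
have ct : (a \in U) != (b \in U).
  by apply/negP => nct; move: cutE small lower; rewrite /dcut nct /=; clear; lia.
have cutU : dcut G U = n.+1 by move: cutE small lower; rewrite /dcut ct; clear; lia.
have jt' : joins G t b a by rewrite joins_sym.
have cutC : dcut G (~: U) <= n.+1 by rewrite dcutC cutU.
have [yC xC] : y \in ~: U /\ x \notin ~: U by rewrite !inE xU.
have := no_split U xU yU cutU; rewrite negb_and => /orP [innerU|innerC];
  case aU: (a \in U) ct; case bU: (b \in U) => // _.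
- by rewrite (tight_cut_endpoint cut xU yU (eq_leq cutU) innerU jt aU) ?bU ?eqxx.
- by rewrite (tight_cut_endpoint cut xU yU (eq_leq cutU) innerU jt' bU) ?aU ?eqxx ?orbT.
- by rewrite (tight_cut_endpoint (min_cut_geC cut) yC xC cutC innerC jt') ?inE ?aU ?bU ?eqxx ?orbT.
by rewrite (tight_cut_endpoint (min_cut_geC cut) yC xC cutC innerC jt) ?inE ?aU ?bU ?eqxx ?orbT.
Qed.

Lemma terminal_edges_contra :
  (forall t a b, joins G t a b -> a != b -> [|| a == x, b == x, a == y | b == y]) ->
  ~ (exists t, joins G t x y) ->
  ~ (exists t1 t2 v, [/\ joins G t1 x v, joins G t2 v y, v != x & v != y]) -> False.
Proof.
move=> ends no_edge no_2path.
pose N := [set v | has (fun t => joins G t x v) (iota 0 (size G))].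
have NP v : reflect (exists t, joins G t x v) (v \in N).
  rewrite inE; apply: (iffP hasP) => [[t _ j]|[t j]]; exists t => //.
  by rewrite mem_iota /= (joins_nth j).1.
have yN : y \notin x |: N by rewrite in_setU1 negb_or eq_sym xy; apply/negP => /NP /no_edge.
have closed t a b : joins G t a b -> a \in x |: N -> b \in x |: N.
  move=> j aN; have [<- //|ab] := eqVneq a b.
  have ay : a != y by apply: contraNneq yN => <-.
  case/or4P: (ends t a b j ab) => /eqP E; subst.
  - by apply/setU1P; right; apply/NP; exists t.
  - exact: setU11.
  - by rewrite eqxx in ay.
  have [ax|ax] := eqVneq a x; first by case: no_edge; exists t; rewrite -ax.
  case/setU1P: aN => [/eqP|/NP [t' j']]; first by rewrite (negbTE ax).
  by case: no_2path; exists t', t, a.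
suff cut0 : dcut G (x |: N) = 0 by have := cut (setU11 x N) yN; rewrite cut0.
apply/eqP; rewrite -leqn0 leqNgt -has_count.
apply/hasPn=> e /(nthP (x, x)) [t lt <-].
have jt : joins G t (nth (x, x) G t).1 (nth (x, x) G t).2.
  by apply: (nth_joins (d := (x, x)) lt); left; case: nth.
rewrite /crossing; apply/negPn/eqP; apply/idP/idP; first exact: closed jt.
by apply: (closed t); rewrite joins_sym.
Qed.

Lemma menger_step : edge_disjoint_paths G x y n.+1.
Proof.
case: (classic (exists t, joins G t x y)) => [[t /edp_direct_edge //]|no_edge].
case: (classic (exists t1 t2 v, [/\ joins G t1 x v, joins G t2 v y, v != x & v != y]))
  => [[t1 [t2 [v [j1 j2 vx vy]]]]|no_2path]; first exact: edp_two_path j1 j2 vx vy.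
case: (classic (exists t, [/\ t < size G, (nth (x, x) G t).1 != (nth (x, x) G t).2 &
                         min_cut_ge (erase_edges G [:: t] x) x y n.+1]))
  => [[t [lt ne cut']]|no_deletable]; first exact: edp_deletable_edge lt ne cut'.
case: (classic (exists U, [/\ x \in U, y \notin U, dcut G U = n.+1 &
                         has_inner_edge G U && has_inner_edge G (~: U)]))
  => [[U [xU yU cutU /andP [inU inC]]]|no_split]; first exact: edp_split_cut xU yU cutU inU inC.
(* Now every non-loop edge meets x or y, so x and its neighbours form an x-y
   cut without crossing edges. *)
exfalso; apply: terminal_edges_contra => // t a b jt ab.
apply: (edge_at_terminal jt ab) => [cut'|U xU yU cutU]; first apply: no_deletable.
  have [lt hh] := joins_nth jt; exists t; split=> //.
  by case: (hh (x, x)) => ->; rewrite //= eq_sym.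
by apply/negP=> split_U; apply: no_split; exists U.
Qed.

End MengerStep.

Theorem menger (V : finType) (G : seq (V * V)) x y n :
  x != y -> min_cut_ge G x y n -> edge_disjoint_paths G x y n.
Proof.
move: {2}(nonloops G).+1 (ltnSn (nonloops G)) => m; elim: m G x y n => // m IH G x y [|n] lt xy cut.
  by exists [::].
apply: menger_step xy cut => G' x' y' n' lt'; apply: IH.
exact: leq_trans lt' lt.
Qed.

(** * Submodularity of the cut function *)

Section CutFunction.
Variables (V : finType) (G : seq (V * V)).
Implicit Types (U X Y : {set V}).

Definition deg_into (s : V) U := count (fun e => incident s e && (other s e \in U)) G.

Lemma dcut_submod X Y : dcut G (X :&: Y) + dcut G (X :|: Y) <= dcut G X + dcut G Y.
Proof.
rewrite /dcut !count_sum -!big_split /=; apply: leq_sum => e _.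
by rewrite /crossing !inE; do 2!case: (_ \in X); do 2!case: (_ \in Y).
Qed.

Lemma dcut_posimod s X Y : s \notin X -> s \notin Y ->
  dcut G (X :\: Y) + dcut G (Y :\: X) + 2 * deg_into s (X :&: Y) <= dcut G X + dcut G Y.
Proof.
move=> sX sY; rewrite /dcut /deg_into !count_sum big_distrr -!big_split /=.
apply: leq_sum => -[a b] _; rewrite /crossing /incident /other !inE /=.
case: (eqVneq a s) => [->|_]; first by rewrite (negbTE sX) (negbTE sY); do 2!case: (_ \in _).
case: (eqVneq b s) => [->|_]; first by rewrite (negbTE sX) (negbTE sY); do 2!case: (_ \in _).
by rewrite muln0 addn0; do 2!case: (_ \in X); do 2!case: (_ \in Y).
Qed.

Lemma odd_dcut X Y : odd (dcut G X) = odd (dcut G (X :&: Y)) (+) odd (dcut G (X :\: Y)).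
Proof.
rewrite /dcut !count_sum; elim: G => [|e l IH]; rewrite ?big_nil ?big_cons //= !oddD IH.
rewrite /crossing !inE; do 2!case: (_ \in X); do 2!case: (_ \in Y);
  by do 2!case: (odd (\sum_(_ <- l) _)).
Qed.

Lemma dcut_setU1 s U : loopless G -> s \notin U ->
  dcut G (s |: U) + 2 * deg_into s U = dcut G U + deg G s.
Proof.
move=> /allP noloop sU; rewrite /dcut /deg_into /deg !count_sum big_distrr -!big_split /=.
apply: eq_big_seq => -[a b] /noloop /= ab; rewrite /crossing /incident /other !inE /=.
case: (eqVneq a s) => [eas|_].
  by rewrite eas eq_sym in ab *; rewrite (negbTE ab) (negbTE sU); case: (b \in U).
case: (eqVneq b s) => [->|_] /=; first by rewrite (negbTE sU); case: (a \in U).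
by rewrite muln0 !addn0.
Qed.

End CutFunction.

(** * Dangerous sets *)

Definition isolated_balanced (T : finType) (R : rel T) (f : T) (P : {set T}) :=
  [/\ f \notin P, #|P| = #|~: (f |: P)|, forall v, v != f -> R f v &
      forall u v, u != f -> v != f -> R u v = ((u \in P) == (v \in P))].

Section Dangerous.
Variables (V T : finType) (A : {set V}) (s : V) (k : nat).
Variables (d : {set V} -> nat) (tip : T -> V).
Implicit Types (U X Y Z : {set V}).

Definition ntips U := #|[set t | tip t \in U]|.
Definition splits U := (A :&: U != set0) && (A :\: U != set0).
Definition dangerous X := [&& s \notin X, splits X & d X <= (2 * k).+1].
Definition codangerous t u := [exists X, [&& dangerous X, tip t \in X & tip u \in X]].

Hypotheses (sA : s \notin A) (tipA : forall t, tip t \in A).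
Hypothesis d_submod : forall X Y, d (X :&: Y) + d (X :|: Y) <= d X + d Y.
Hypothesis d_posimod : forall X Y, s \notin X -> s \notin Y ->
  d (X :\: Y) + d (Y :\: X) + 2 * ntips (X :&: Y) <= d X + d Y.
Hypothesis odd_d : forall X Y, odd (d X) = odd (d (X :&: Y)) (+) odd (d (X :\: Y)).
Hypothesis d_setU1 : forall U, s \notin U -> d (s |: U) + 2 * ntips U = d U + #|T|.
Hypothesis d_splits : forall U, splits U -> 2 * k <= d U.
Hypothesis card_T : 3 < #|T|.

Lemma codangerousP t u :
  reflect (exists X, [/\ dangerous X, tip t \in X & tip u \in X]) (codangerous t u).
Proof. by apply: (iffP existsP) => -[X] /and3P; exists X. Qed.

Lemma codangerous_sym t u : codangerous t u = codangerous u t.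
Proof. by apply/codangerousP/codangerousP => -[X [dX tX uX]]; exists X. Qed.

Lemma splitsI U a b : a \in A -> a \in U -> b \in A -> b \notin U -> splits U.
Proof.
move=> aA aU bA bU; apply/andP; split; apply/set0Pn.
  by exists a; rewrite inE aA aU.
by exists b; rewrite inE bA bU.
Qed.

Lemma splits_out U : splits U -> exists2 b, b \in A & b \notin U.
Proof. by case/andP=> _ /set0Pn [b]; rewrite inE => /andP [bU bA]; exists b. Qed.

Lemma splits_setU1 U : splits U -> splits (s |: U).
Proof.
move=> sU; case/andP: (sU) => /set0Pn [a]; rewrite inE => /andP [aA aU] _.
have [b bA bU] := splits_out sU; apply: (splitsI aA _ bA); first by rewrite inE aU orbT.
by rewrite !inE negb_or bU andbT; apply: contraNneq sA => <-.
Qed.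

Lemma ntips_gt0 t U : tip t \in U -> 0 < ntips U.
Proof. by move=> tU; apply/card_gt0P; exists t; rewrite inE. Qed.

Lemma not_codangerous_cover e f g X Y : dangerous X -> dangerous Y ->
  tip e \in X -> tip f \in X -> tip f \in Y -> tip g \in Y -> ~~ codangerous e g ->
  [/\ tip e \notin Y, tip g \notin X, A \subset X :|: Y & ntips (X :&: Y) <= 1].
Proof.
move=> dX dY eX fX fY gY not_eg.
have [sX spX dXl] := and3P dX; have [sY spY dYl] := and3P dY.
have eY : tip e \notin Y by apply: contra not_eg => eY; apply/codangerousP; exists Y.
have gX : tip g \notin X by apply: contra not_eg => gX; apply/codangerousP; exists X.
have dXY : 2 * k <= d (X :\: Y).
  by apply/d_splits/(splitsI (tipA e) _ (tipA f)); rewrite !inE ?eY ?eX ?fY.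
have dYX : 2 * k <= d (Y :\: X).
  by apply/d_splits/(splitsI (tipA g) _ (tipA f)); rewrite !inE ?gY ?gX ?fX.
have ntips1 : 0 < ntips (X :&: Y) by apply: (@ntips_gt0 f); rewrite inE fX fY.
have pos := d_posimod sX sY.
split=> //; last by move: pos dXY dYX dXl dYl; clear; lia.
apply/negPn/negP=> /subsetPn [b bA bXY]; case/negP: not_eg; apply/codangerousP.
exists (X :|: Y); rewrite !inE eX gY orbT; split=> //.
have dXe : d X = (2 * k).+1 by move: pos dXY dYX dXl dYl ntips1; clear; lia.
have dXYe : d (X :\: Y) = 2 * k by move: pos dXY dYX dXl dYl ntips1; clear; lia.
(* Parity makes d (X :&: Y) odd, hence > 2k, and then submodularity
   leaves d (X :|: Y) <= 2k+1. *)
have odd_meet : odd (d (X :&: Y)).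
  by move: (odd_d X Y); rewrite dXe dXYe oddS !oddM /= addbF => <-.
have dI : 2 * k <= d (X :&: Y).
  by apply/d_splits/(splitsI (tipA f) _ (tipA e)); rewrite in_setI ?fX ?fY ?(negbTE eY) ?andbF.
have meet_big : (2 * k).+1 <= d (X :&: Y).
  by rewrite ltn_neqAle dI andbT; apply: contraTneq odd_meet => <-; rewrite oddM.
rewrite /dangerous inE negb_or sX sY (splitsI (tipA e) _ bA bXY) ?inE ?eX //=.
by have := d_submod X Y; move: meet_big dXe dYl; clear; lia.
Qed.

Lemma dangerous_cover X Z h h' : dangerous X -> dangerous Z ->
  tip h \in X -> tip h \in Z -> tip h' \in Z -> tip h' \notin X ->
  #|T| < 2 * ntips X -> A \subset X :|: Z.
Proof.
move=> /and3P [sX spX dXl] /and3P [sZ spZ dZl] hX hZ h'Z h'X big.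
apply/negPn/negP=> /subsetPn [b bA bXZ].
have [a aA aX] := splits_out spX.
have dI : 2 * k <= d (X :&: Z).
  by apply/d_splits/(splitsI (tipA h) _ aA); rewrite in_setI ?hX ?hZ ?(negbTE aX).
have spU : splits (X :|: Z) by apply: (splitsI (tipA h) _ bA bXZ); rewrite in_setU hX.
have sU : s \notin X :|: Z by rewrite in_setU negb_or sX sZ.
have more : (ntips X).+1 <= ntips (X :|: Z).
  have -> : (ntips X).+1 = #|h' |: [set t | tip t \in X]| by rewrite cardsU1 inE h'X.
  apply/subset_leq_card/subsetP => t; rewrite !inE.
  by case/predU1P=> [->|->]; rewrite ?h'Z ?orbT.
have := d_setU1 sU; have := d_splits (splits_setU1 spU); have := d_submod X Z.
by move: dI more big dXl dZl; clear; lia.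
Qed.

Section NonTransitive.
Variables (e f g : T) (X Y : {set V}).
Hypotheses (dX : dangerous X) (dY : dangerous Y) (eX : tip e \in X) (fX : tip f \in X)
  (fY : tip f \in Y) (gY : tip g \in Y) (not_eg : ~~ codangerous e g).

Let P := [set t | (tip t \in X) && (tip t \notin Y)].
Let Q := [set t | (tip t \in Y) && (tip t \notin X)].

Lemma tip_in_both t : tip t \in X -> tip t \in Y -> t = f.
Proof.
have [_ _ _ /card_le1_eqP le1] := not_codangerous_cover dX dY eX fX fY gY not_eg.
by move=> tX tY; apply: le1; rewrite !inE ?tX ?tY ?fX ?fY.
Qed.

Lemma tips_partition t : [|| t == f, t \in P | t \in Q].
Proof.
have [_ _ cover _] := not_codangerous_cover dX dY eX fX fY gY not_eg.
have := subsetP cover _ (tipA t); rewrite !inE.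
case tX: (tip t \in X); case tY: (tip t \in Y) => //= _; rewrite ?orbT //.
by rewrite (tip_in_both tX tY) eqxx.
Qed.

Lemma fP : f \notin P. Proof. by rewrite inE fY andbF. Qed.
Lemma fQ : f \notin Q. Proof. by rewrite inE fX andbF. Qed.

Lemma ntipsX : ntips X = #|P|.+1.
Proof.
rewrite /ntips (_ : [set t | tip t \in X] = f |: P) ?cardsU1 ?fP //; apply/setP => t.
rewrite !inE; case: eqVneq => [->|tf] /=; first by rewrite fX.
case tX: (tip t \in X); case tY: (tip t \in Y) => //=.
by rewrite (tip_in_both tX tY) eqxx in tf.
Qed.

Lemma ntipsY : ntips Y = #|Q|.+1.
Proof.
rewrite /ntips (_ : [set t | tip t \in Y] = f |: Q) ?cardsU1 ?fQ //; apply/setP => t.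
rewrite !inE; case: eqVneq => [->|tf] /=; first by rewrite fY.
case tX: (tip t \in X); case tY: (tip t \in Y) => //=.
by rewrite (tip_in_both tX tY) eqxx in tf.
Qed.

Lemma compl_fP : ~: (f |: P) = Q.
Proof.
apply/setP => t; rewrite !inE negb_or; have := tips_partition t.
case: eqVneq => [->|_] /=; first by rewrite fX andbF.
by rewrite !inE; case: (tip t \in X); case: (tip t \in Y).
Qed.

Lemma card_T_PQ : #|T| = #|P| + #|Q| + 1.
Proof. by have := cardsC (f |: P); rewrite compl_fP cardsU1 fP; clear; lia. Qed.

Lemma card_P_Q : #|P| = #|Q|.
Proof.
have [sX spX dXl] := and3P dX; have [sY spY dYl] := and3P dY.
have := d_setU1 sX; have := d_splits (splits_setU1 spX).
have := d_setU1 sY; have := d_splits (splits_setU1 spY).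
by rewrite ntipsX ntipsY card_T_PQ; move: dXl dYl; clear; lia.
Qed.

Lemma not_codangerous_P_Q u v : u \in P -> v \in Q -> ~~ codangerous u v.
Proof.
rewrite !inE => /andP [uX uY] /andP [vY vX]; apply/codangerousP=> -[Z [dZ uZ vZ]].
have half : #|T| < 2 * ntips X /\ #|T| < 2 * ntips Y.
  by rewrite ntipsX ntipsY card_T_PQ card_P_Q; clear; lia.
have AXZ := dangerous_cover dX dZ uX uZ vZ vX half.1.
have AYZ := dangerous_cover dY dZ vY vZ uZ uY half.2.
have PXZ : #|P| <= ntips (X :&: Z).
  apply/subset_leq_card/subsetP => t; rewrite !inE => /andP [-> tY] /=.
  by have := subsetP AYZ _ (tipA t); rewrite inE (negbTE tY).
have [sX _ dXl] := and3P dX; have [sZ spZ dZl] := and3P dZ.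
have [a aA aZ] := splits_out spZ.
have aX : a \in X by have := subsetP AXZ _ aA; rewrite inE (negbTE aZ) orbF.
have dXZ : 2 * k <= d (X :\: Z).
  by apply/d_splits/(splitsI aA _ (tipA u)); rewrite in_setD ?aX ?aZ ?uZ.
have dZX : 2 * k <= d (Z :\: X).
  by apply/d_splits/(splitsI (tipA v) _ (tipA u)); rewrite in_setD ?vX ?vZ ?uX.
(* As #|T| = 2 #|P| + 1 > 3, at least two tips lie in X :&: Z, while
   posimodularity allows at most one. *)
have := d_posimod sX sZ; have := card_T_PQ; rewrite card_P_Q in PXZ *.
by move: card_T PXZ dXZ dZX dXl dZl; clear; lia.
Qed.

Lemma non_transitive_structure : isolated_balanced codangerous f P /\ odd #|T|.
Proof.
have inX t : t \in P -> tip t \in X by rewrite inE => /andP [].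
have inY t : t \in Q -> tip t \in Y by rewrite inE => /andP [].
have notP t : t \in Q -> t \notin P by rewrite !inE => /andP [_ /negbTE ->].
split; last by rewrite card_T_PQ card_P_Q addn1 /= addnn odd_double.
split; first exact: fP.
- by rewrite compl_fP card_P_Q.
- move=> v vf; apply/codangerousP; have := tips_partition v; rewrite (negbTE vf) /=.
  by case/orP=> [/inX|/inY]; [exists X | exists Y].
- move=> u v uf vf; have := tips_partition u; have := tips_partition v.
  rewrite (negbTE uf) (negbTE vf) /= => /orP [vP|vQ] /orP [uP|uQ].
  + by rewrite uP vP; apply/codangerousP; exists X; rewrite !inX.
  + by rewrite vP (negbTE (notP _ uQ)) codangerous_sym (negbTE (not_codangerous_P_Q vP uQ)).
  + by rewrite uP (negbTE (notP _ vQ)) (negbTE (not_codangerous_P_Q uP vQ)).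
  + rewrite (negbTE (notP _ uQ)) (negbTE (notP _ vQ)).
    by apply/codangerousP; exists Y; rewrite !inY.
Qed.

End NonTransitive.

Theorem codangerous_dichotomy :
  (forall e f g, codangerous e f -> codangerous f g -> e != g -> codangerous e g) \/
  exists f P, isolated_balanced codangerous f P /\ odd #|T|.
Proof.
case: (classic (forall e f g, codangerous e f -> codangerous f g -> e != g -> codangerous e g))
  => [trans|not_trans]; [by left | right].
have [e [f [g [/codangerousP [X [dX eX fX]] /codangerousP [Y [dY fY gY]] not_eg]]]] :
    exists e f g, [/\ codangerous e f, codangerous f g & ~~ codangerous e g].
  apply: NNPP => none; apply: not_trans => e f g ef fg _.
  by case: (boolP (codangerous e g)) => // not_eg; case: none; exists e, f, g.
by exists f, [set t | (tip t \in X) && (tip t \notin Y)]; apply: non_transitive_structure not_eg.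
Qed.

End Dangerous.

(** * The lifting graph *)

Section ComplementShapes.
Variables (T : finType) (adj : T -> T -> Prop) (R : rel T).
Hypotheses (symR : symmetric R) (adjE : forall u v, adj u v <-> u != v /\ ~~ R u v).

Lemma complete_multipartite_compl :
  (forall e f g, R e f -> R f g -> e != g -> R e g) -> complete_multipartite adj.
Proof.
move=> transR; pose E u v := (u == v) || R u v.
have Etrans u v w : E u v -> E v w -> E u w.
  rewrite /E => /orP [/eqP -> //|uv] /orP [/eqP <-|vw]; first by rewrite uv orbT.
  by case: (eqVneq u w) => //= uw; apply: transR uv vw uw.
have Esym u v : E u v = E v u by rewrite /E eq_sym symR.
pose c u := find (E^~ u) (enum T).
have hasE u : has (E^~ u) (enum T) by apply/hasP; exists u; rewrite ?mem_enum /E ?eqxx.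
have cE u v : (c u == c v) = E u v.
  apply/eqP/idP => [cuv|Euv].
    have := nth_find u (hasE u); have := nth_find u (hasE v); rewrite -/(c u) -/(c v) -cuv.
    by move=> Ev Eu; apply: Etrans Ev; rewrite Esym.
  by apply: eq_find => w; apply/idP/idP => Ew; apply: Etrans Ew _; rewrite // Esym.
exists c => u v uv; rewrite adjE cE /E (negbTE uv) /=.
by split=> [[]|].
Qed.

Lemma isolated_plus_balanced_compl f P :
  isolated_balanced R f P -> isolated_plus_balanced_bipartite adj.
Proof.
case=> fP cardP Rf RP; exists f, P; split=> //.
  move=> v; split=> /adjE [fv /negP []]; first by apply: Rf; rewrite eq_sym.
  by rewrite symR; apply: Rf.
move=> u v uf vf uv; rewrite adjE RP // uv.
by case: (_ \in P); case: (_ \in P); split=> // -[].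
Qed.

End ComplementShapes.

Section Lifting.
Variables (V : finType) (G : seq (V * V)) (k : nat) (A : {set V}) (s : V).
Hypotheses (loopG : loopless G) (sA : s \notin A)
  (connA : forall x y, x \in A -> y \in A -> x != y -> edge_disjoint_paths G x y (2 * k))
  (touchA : forall e, e \in G -> (e.1 \in A) || (e.2 \in A)).
Implicit Types (U W : {set V}) (u v : LVert G s).

Definition far_end u : V := other s (nth (s, s) G (val (val u))).

Lemma far_endA u : far_end u \in A.
Proof.
have := touchA (mem_nth (s, s) (ltn_ord (val u))); have := valP u.
rewrite /far_end /other /incident; case: (nth (s, s) G _) => a b /=.
by case: (eqVneq a s) => [->|_] /=; [rewrite (negbTE sA) | move/eqP->; rewrite (negbTE sA) orbF].
Qed.

Lemma ntips_far_end U : ntips far_end U = deg_into G s U.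
Proof.
pose p i := incident s (nth (s, s) G i) && (other s (nth (s, s) G i) \in U).
have -> : ntips far_end U = #|[set i : 'I_(size G) | p i]|.
  rewrite /ntips -(card_imset _ val_inj); apply: eq_card => i; rewrite inE.
  apply/imsetP/idP => [[u]|/andP [inc iU]]; first by rewrite inE /p => uU ->; rewrite (valP u).
  by exists (exist _ i inc); rewrite ?inE.
by rewrite card_ord_count /deg_into -{2}(mkseq_nth (s, s) G) /mkseq count_map.
Qed.

Lemma card_LVert : #|{: LVert G s}| = deg G s.
Proof.
have := ntips_far_end setT; rewrite /ntips (_ : [set u | far_end u \in setT] = setT).
  by rewrite cardsT => ->; apply: eq_count => e; rewrite inE andbT.
by apply/setP => u; rewrite !inE.
Qed.

Lemma crossing_incident W e : incident s e -> s \notin W -> crossing W e = (other s e \in W).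
Proof.
rewrite /incident /other /crossing; case: e => a b /=.
by case: (eqVneq a s) => [->|_] /= => [_|/eqP ->] /negbTE ->; case: (_ \in W).
Qed.

Lemma dcut_lift u v W : val u != val v -> s \notin W ->
  dcut (Defs.lift G s (val (val u)) (val (val v))) W + 2 * ((far_end u \in W) && (far_end v \in W))
  = dcut G W.
Proof.
move=> uv sW; set i := val (val u); set j := val (val v); have ij : i != j := uv.
have [ltu ltv] := (ltn_ord (val u), ltn_ord (val v)).
set rest := [seq t <- iota 0 (size G) | (t != i) && (t != j)].
have perm_ij : perm_eq (iota 0 (size G)) (i :: j :: rest).
  apply: uniq_perm; rewrite ?iota_uniq //=.
    by rewrite !inE !mem_filter !eqxx !andbF (negbTE ij) filter_uniq ?iota_uniq.
  move=> t; rewrite !inE mem_filter mem_iota /=.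
  case: (eqVneq t i) => [->|_] /=; first by rewrite ltu.
  by case: (eqVneq t j) => [->|_] /=; rewrite ?ltv.
rewrite -(dcut_iota G (negbT (crossing_loop W s))) (permP perm_ij) /=.
rewrite (crossing_incident (valP u) sW) (crossing_incident (valP v) sW).
rewrite /dcut /Defs.lift /= count_map count_filter -/(far_end u) -/(far_end v) /crossing /=.
by move: (count _ _) => c; case: (_ \in W); case: (_ \in W); rewrite /= addnC.
Qed.

Lemma dcut_splits U : splits A U -> 2 * k <= dcut G U.
Proof.
case/andP=> /set0Pn [a]; rewrite inE => /andP [aA aU] /set0Pn [b]; rewrite inE => /andP [bU bA].
have ab : a != b by apply: contraNneq bU => <-.
exact: edp_le_dcut (connA aA bA ab) aU bU.
Qed.

Let lifted u v := Defs.lift G s (val (val u)) (val (val v)).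

Lemma dcut_lifted_splits u v W : val u != val v -> s \notin W -> splits A W ->
  ~~ codangerous A s k (dcut G) far_end u v -> 2 * k <= dcut (lifted u v) W.
Proof.
move=> uv sW spW not_uv; have := dcut_lift uv sW; have := dcut_splits spW.
case uW: (far_end u \in W); case vW: (far_end v \in W) => /=; try by clear; lia.
have : ~~ (dcut G W <= (2 * k).+1).
  apply: contra not_uv => small; apply/codangerousP; exists W; split=> //.
  by rewrite /dangerous sW spW small.
by clear; lia.
Qed.

Lemma admissibleE u v : val u != val v ->
  admissible G A k s (val (val u)) (val (val v)) <-> ~~ codangerous A s k (dcut G) far_end u v.
Proof.
move=> uv; split=> [adm|not_uv x y xs ys xy].
  apply/codangerousP=> -[X [/and3P [sX spX small] uX vX]].
  case/andP: spX => /set0Pn [a]; rewrite inE => /andP [aA aX] /set0Pn [b].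
  rewrite inE => /andP [bX bA].
  have ab : a != b by apply: contraNneq bX => <-.
  have [as' bs'] : a != s /\ b != s by split; apply: contraNneq sA => <-.
  have := edp_le_dcut (adm a b as' bs' ab) aX bX; rewrite /tauA aA bA /=.
  by have := dcut_lift uv sX; rewrite uX vX /=; move: small; clear; lia.
rewrite /tauA; case: ifP => [/andP [xA yA]|_]; last by exists [::].
apply: menger => // U xU yU; case sU: (s \in U).
  rewrite -dcutC; apply: dcut_lifted_splits => //; first by rewrite inE sU.
  by apply: (splitsI yA _ xA); rewrite inE ?xU ?yU.
by apply: dcut_lifted_splits => //; [rewrite sU | apply: splitsI xA xU yA yU].
Qed.

Lemma LadjE u v : Ladj A k u v <-> u != v /\ ~~ codangerous A s k (dcut G) far_end u v.
Proof. by split=> -[uv adm]; split=> //; apply/(admissibleE uv). Qed.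

Theorem lifting_graph_shape : 3 < deg G s ->
  complete_multipartite (@Ladj V G A k s) \/
  (isolated_plus_balanced_bipartite (@Ladj V G A k s) /\ odd (deg G s)).
Proof.
move=> deg_s; have adjE := LadjE; have symR := codangerous_sym A s k (dcut G) far_end.
have posimod (X Y : {set V}) : s \notin X -> s \notin Y ->
    dcut G (X :\: Y) + dcut G (Y :\: X) + 2 * ntips far_end (X :&: Y) <= dcut G X + dcut G Y.
  by rewrite ntips_far_end; apply: dcut_posimod.
have setU1 (U : {set V}) : s \notin U ->
    dcut G (s |: U) + 2 * ntips far_end U = dcut G U + #|{: LVert G s}|.
  by rewrite ntips_far_end card_LVert; apply: dcut_setU1.
have deg_T : 3 < #|{: LVert G s}| by rewrite card_LVert.
have [trans|[f [P [shape odd_T]]]] := codangerous_dichotomy sA far_endA (dcut_submod G)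
  posimod (odd_dcut G) setU1 dcut_splits deg_T.
  by left; apply: complete_multipartite_compl trans.
by right; split; [apply: isolated_plus_balanced_compl shape | rewrite -card_LVert].
Qed.

End Lifting.

Unset Implicit Arguments.

Theorem theorem3p3 (V : finType) (G : seq (V * V)) (k : nat) (A : {set V}) (s : V) :
  loopless G ->
  0 < k ->
  A \proper [set: V] ->
  (forall x y, x \in A -> y \in A -> x != y -> edge_disjoint_paths G x y (2 * k)) ->
  (forall e, e \in G -> (e.1 \in A) || (e.2 \in A)) ->
  s \notin A ->
  3 < deg G s ->
  complete_multipartite (@Ladj V G A k s) \/
  (isolated_plus_balanced_bipartite (@Ladj V G A k s) /\ odd (deg G s)).
Proof.
move=> loopG _ _ connA touchA sA; exact: lifting_graph_shape.
Qed.
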